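(* The complete tripartite graph $K_{2,2,4}$ is chromatic-choosable, but it is not weakly enumeratively chromatic-choosable.
   Context: A graph $G$ is chromatic-choosable if its list chromatic number equals its chromatic number. For a list assignment $L$, $P(G,L)$ is the number of proper $L$-colorings; $P(G,m)$ is the chromatic polynomial, and the list color function $P_\ell(G,m)$ is the minimum of $P(G,L)$ over all assignments $L$ of lists of size $m$. $G$ is weakly enumeratively chromatic-choosable if $P_\ell(G,\chi(G))=P(G,\chi(G))$. *)

From mathcomp Require Import all_boot all_order.
Set Implicit Arguments. Unset Strict Implicit. Unset Printing Implicit Defensive.

Section Coloring.
Variables (T : finType) (e : rel T).

Definition proper (C : Type) (f : T -> C) : Prop :=
  forall u v, e u v -> f u <> f v.

Definition colorable (k : nat) : Prop :=
  exists f : {ffun T -> 'I_k}, proper f.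

Definition is_chromatic_number (k : nat) : Prop :=
  colorable k /\ forall j, j < k -> ~ colorable j.

(* A list assignment: L v is a finite list (set) of colors, colors drawn from
   the naturals below some bound N (every finite family of finite lists of
   natural-number colors fits into some 'I_N). *)
Definition list_of_size (N : nat) (L : T -> {set 'I_N}) (m : nat) : Prop :=
  forall v, #|L v| = m.

Definition Lcoloring (N : nat) (L : T -> {set 'I_N}) (f : {ffun T -> 'I_N}) :=
  (forall v, f v \in L v) /\ proper f.

Definition choosable (k : nat) : Prop :=
  forall N (L : T -> {set 'I_N}), @list_of_size N L k ->
    exists f, Lcoloring L f.

Definition is_list_chromatic_number (k : nat) : Prop :=
  choosable k /\ forall j, j < k -> ~ choosable j.

Definition chromatic_choosable : Prop :=
  exists k, is_chromatic_number k /\ is_list_chromatic_number k.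

Definition PL (N : nat) (L : T -> {set 'I_N}) : nat :=
  #|[set f : {ffun T -> 'I_N} | [forall v, f v \in L v] &&
                                 [forall u, forall v, e u v ==> (f u != f v)]]|.

Definition chrom_poly (m : nat) : nat :=
  #|[set f : {ffun T -> 'I_m} | [forall u, forall v, e u v ==> (f u != f v)]]|.

Definition is_list_color_fun_value (m p : nat) : Prop :=
  (exists N (L : T -> {set 'I_N}), @list_of_size N L m /\ PL L = p) /\
  (forall N (L : T -> {set 'I_N}), @list_of_size N L m -> p <= PL L).

Definition weakly_enum_chromatic_choosable : Prop :=
  forall k, is_chromatic_number k -> is_list_color_fun_value k (chrom_poly k).

End Coloring.

Definition part224 (v : 'I_8) : nat := if v < 2 then 0 else if v < 4 then 1 else 2.
Definition K224 : rel 'I_8 := fun u v => part224 u != part224 v.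

From mathcomp Require Import all_boot all_order fingroup perm zify.
Set Implicit Arguments. Unset Strict Implicit. Unset Printing Implicit Defensive.

(* K_{2,2,4} contains a triangle and its three parts give a proper 3-colouring, so chi = 3.
   Given 3-lists, it suffices to colour the K_{2,2} spanned by the two parts of size 2 so
   that the (at most four) colours used contain none of the four lists of the part of
   size 4.  A list contained in the colour set of some colouring is one of its 3-subsets,
   so whether four lists can block every colouring of K_{2,2} is decided by a finite
   branching search; after renaming the colours in order of first appearance there are
   finitely many configurations of the lists on K_{2,2}, and none can be blocked.
   Finally, permuting the colours of the parts gives P(G,3) >= 3! = 6, while an explicit
   3-list assignment admits only 4 proper colourings. *)

Section Subseqs.
Variable T : eqType.

Fixpoint subseqs (j : nat) (s : seq T) {struct s} : seq (seq T) :=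
  match j, s with
  | 0, _ => [:: [::]]
  | _.+1, [::] => [::]
  | j'.+1, x :: s' => map (cons x) (subseqs j' s') ++ subseqs j s'
  end.

Lemma filter_subseqs (P : pred T) s : [seq x <- s | P x] \in subseqs (count P s) s.
Proof.
elim: s => [|x s IHs] /=; first by case: (count P [::]).
case: (P x) => /=; first by rewrite add1n mem_cat map_f.
by case: (count P s) IHs => [|n] IHs /=; [case: s IHs | rewrite mem_cat IHs orbT].
Qed.

Fixpoint choices (ls : seq (seq T)) : seq (seq T) :=
  if ls is l :: ls' then [seq x :: t | x <- l, t <- choices ls'] else [:: [::]].

Lemma mem_choices ls t : (t \in choices ls) = all2 (fun x l => x \in l) t ls.
Proof.
elim: ls t => [|l ls IHls] [|x t] //=; first by apply/allpairsP => -[[y u] []].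
apply/allpairsP/andP => [[[y u] /= [yl uls [-> ->]]]|[xl tls]]; first by rewrite -IHls.
by exists (x, t); rewrite /= IHls.
Qed.

End Subseqs.

Definition triple {X : eqType} (T : seq X) := uniq T && (size T == 3).

Definition avoids {X : eqType} (U : seq X) (Ts : seq (seq X)) :=
  all (fun T => ~~ all [in U] T) Ts.

Section Blocking.
Variable X : eqType.
Implicit Types (U T : seq X) (F Ts : seq (seq X)).

Lemma triple_in_subseqs U T : triple T -> all [in U] T ->
  exists2 B, B \in subseqs 3 (undup U) & B =i T.
Proof.
case/andP=> uT /eqP sT /allP TU.
have BT : [seq x <- undup U | x \in T] =i T.
  by move=> x; rewrite mem_filter mem_undup andb_idr // => /TU.
exists [seq x <- undup U | x \in T] => //.
have <- : count [in T] (undup U) = 3.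
  by rewrite -size_filter -sT; apply/perm_size/uniq_perm; rewrite ?filter_uniq ?undup_uniq.
exact: filter_subseqs.
Qed.

(* A triple contained in the head U of F is a 3-subset of U: branch on those. *)
Fixpoint unblockable k F :=
  if F is U :: _ then
    if k is k'.+1 then
      all (fun B => unblockable k' [seq U' <- F | ~~ all [in U'] B]) (subseqs 3 (undup U))
    else true
  else false.

Lemma unblockableP k F Ts : unblockable k F -> size Ts <= k -> all triple Ts ->
  has (avoids^~ Ts) F.
Proof.
elim: k F Ts => [|k IHk] [|U F] Ts //; first by case: Ts.
move=> /allP unblF sizeTs tripleTs.
have [avU|/allPn[T0 T0Ts]] := boolP (avoids U Ts); first by rewrite /= avU.
rewrite negbK => T0U.
have [B BU BT0] := triple_in_subseqs (allP tripleTs _ T0Ts) T0U.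
have sizeTs' : size (rem T0 Ts) <= k by rewrite size_rem // -subn1 leq_subLR add1n.
have tripleTs' : all triple (rem T0 Ts) by apply/allP => T /mem_rem /(allP tripleTs).
have /hasP[U' /[!mem_filter] /andP[U'B U'F] avU'] := IHk _ _ (unblF B BU) sizeTs' tripleTs'.
apply/hasP; exists U' => //.
by rewrite /avoids (perm_all _ (perm_to_rem T0Ts)) /= -(eq_all_r BT0) U'B.
Qed.

Definition K22_proper U :=
  if U is [:: a1; a2; b1; b2] then [&& a1 != b1, a1 != b2, a2 != b1 & a2 != b2]
  else false.

Definition K22_colorings (l1 l2 l3 l4 : seq X) :=
  [seq U <- choices [:: l1; l2; l3; l4] | K22_proper U].

End Blocking.

Section Relabel.
Variables (X Y : eqType) (h : X -> Y).
Implicit Types (U T : seq X) (Ts : seq (seq X)).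

Lemma K22_colorings_map l1 l2 l3 l4 (m1 m2 m3 m4 : seq Y) V :
  map h l1 =i m1 -> map h l2 =i m2 -> map h l3 =i m3 -> map h l4 =i m4 ->
  V \in K22_colorings m1 m2 m3 m4 ->
  exists2 U, U \in K22_colorings l1 l2 l3 l4 & V = map h U.
Proof.
move=> m1E m2E m3E m4E; rewrite mem_filter mem_choices.
case: V => [|? [|? [|? [|? []]]]] //=; rewrite -m1E -m2E -m3E -m4E andbT.
case/andP=> proper /and4P[/mapP[a1 a1l E1] /mapP[a2 a2l E2] /mapP[b1 b1l E3] /mapP[b2 b2l E4]].
have ne x y : h x != h y -> x != y := contra_neq (@congr1 _ _ h x y).
subst; case/and4P: proper => /ne a1b1 /ne a1b2 /ne a2b1 /ne a2b2.
exists [:: a1; a2; b1; b2] => //.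
by rewrite mem_filter mem_choices /= a1l a2l b1l b2l a1b1 a1b2 a2b1 a2b2.
Qed.

Lemma avoids_map U Ts : avoids (map h U) (map (map h) Ts) -> avoids U Ts.
Proof.
rewrite /avoids all_map => /allP avTs; apply/allP => T /avTs /=.
by apply: contraNN; rewrite all_map => /allP TU; apply/allP => x /TU /= /(map_f h).
Qed.

End Relabel.

Definition add_new {X : eqType} (acc e : seq X) := acc ++ [seq y <- e | y \notin acc].

Section FirstOccurrence.
Variable X : eqType.
Implicit Types (acc e s : seq X) (es : seq (seq X)).

Lemma add_new_uniq acc e : uniq acc -> uniq e -> uniq (add_new acc e).
Proof.
move=> uacc ue; rewrite cat_uniq uacc filter_uniq // andbT.
by apply/hasPn => y; rewrite mem_filter => /andP[].
Qed.

Lemma mem_add_new acc e : {subset e <= add_new acc e}.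
Proof. by move=> y ye; rewrite mem_cat mem_filter ye andbT; case: (y \in acc). Qed.

Lemma foldl_add_new_prefix acc es : exists r, foldl add_new acc es = acc ++ r.
Proof.
elim: es acc => [|e es IHes] acc /=; first by exists [::]; rewrite cats0.
have [r ->] := IHes (add_new acc e).
by exists ([seq y <- e | y \notin acc] ++ r); rewrite catA.
Qed.

Lemma map_index_uniq s : uniq s -> [seq index y s | y <- s] = iota 0 (size s).
Proof.
elim: s => //= y s IHs /andP[ys us]; rewrite eqxx (iotaDl 1 0) -IHs // -map_comp.
congr (_ :: _); apply/eq_in_map => z zs /=.
by rewrite ifN //; apply: contraNneq ys => ->.
Qed.

End FirstOccurrence.

(* Colours are relabelled 0, 1, 2, ... in order of first appearance.  Once m labels are
   in use, a 3-list consists of j of them (in increasing order) followed by the 3 - j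
   fresh labels m, ..., m + 2 - j; the second component is the new number of labels. *)
Definition next_canon (m : nat) : seq (seq nat * nat) :=
  [seq (o ++ iota m (3 - j), m + (3 - j)) | j <- iota 0 4, o <- subseqs j (iota 0 m)].

Fixpoint canon_lists (k m : nat) : seq (seq (seq nat)) :=
  if k is k'.+1 then [seq p.1 :: ls | p <- next_canon m, ls <- canon_lists k' p.2]
  else [:: [::]].

Lemma add_new_canon (X : eqType) (acc e : seq X) : uniq acc -> triple e ->
  exists2 p, p \in next_canon (size acc) &
    p.2 = size (add_new acc e) /\ perm_eq [seq index y (add_new acc e) | y <- e] p.1.
Proof.
move=> uacc /andP[ue /eqP sizee].
set old := [seq y <- e | y \in acc]; set new := [seq y <- e | y \notin acc].
set oi := [seq index y acc | y <- old].
set o := [seq i <- iota 0 (size acc) | i \in oi].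
have uoi : uniq oi.
  rewrite map_inj_in_uniq ?filter_uniq // => y z.
  by rewrite !mem_filter => /andP[ya _] /andP[za _]; apply: index_inj.
have o_oi : perm_eq o oi.
  apply: uniq_perm; rewrite ?filter_uniq ?iota_uniq // => i.
  rewrite mem_filter mem_iota /= add0n andb_idr // => /mapP[y].
  by rewrite mem_filter => /andP[ya _] ->; rewrite index_mem.
have sizenew : size new = 3 - size old.
  by rewrite -sizee -(count_predC [in acc] e) !size_filter addKn.
have map_old : [seq index y (add_new acc e) | y <- old] = oi.
  by apply/eq_in_map => y; rewrite mem_filter index_cat => /andP[->].
have map_new : [seq index y (add_new acc e) | y <- new] = iota (size acc) (size new).
  rewrite -[size acc]addn0 iotaDl -map_index_uniq ?filter_uniq // -map_comp.
  by apply/eq_in_map => y; rewrite mem_filter /= index_cat => /andP[/negPf->].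
exists (o ++ iota (size acc) (3 - size old), size acc + (3 - size old)).
  apply/allpairsPdep; exists (size old), o; split => //.
    by rewrite mem_iota ltnS -sizee size_filter count_size.
  have <- : count [in oi] (iota 0 (size acc)) = size old.
    by rewrite -size_filter (perm_size o_oi) size_map.
  exact: filter_subseqs.
split; first by rewrite size_cat sizenew.
rewrite perm_sym (perm_catr _ o_oi) -sizenew -map_new -map_old -map_cat.
by apply/perm_map; rewrite perm_filterC.
Qed.

Lemma canon_chain (X : eqType) (acc : seq X) es r : uniq acc -> all triple es ->
  exists2 ls, ls \in canon_lists (size es) (size acc) &
    all2 perm_eq [seq [seq index y (foldl add_new acc es ++ r) | y <- e] | e <- es] ls.
Proof.
elim: es acc => [|e es IHes] acc uacc /=; first by exists [::].
case/andP=> /[dup] /andP[ue _] te tes.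
have [p p_canon [p2E perm_p]] := add_new_canon uacc te.
have [ls ls_canon perm_ls] := IHes _ (add_new_uniq uacc ue) tes.
exists (p.1 :: ls); first by apply/allpairsPdep; exists p, ls; rewrite p2E.
rewrite /= {}perm_ls andbT; have [r' ->] := foldl_add_new_prefix (add_new acc e) es.
rewrite -catA; congr (perm_eq _ _): perm_p; apply/eq_in_map => y /(mem_add_new acc) ye.
by rewrite index_cat ye.
Qed.

(* Branching first on colourings with few distinct colours keeps the search small. *)
Lemma canon_K22_unblockable :
  all (fun ls => if ls is [:: c1; c2; c3; c4] then
                   unblockable 4 (sort (fun U V => size (undup U) <= size (undup V))
                                       (K22_colorings c1 c2 c3 c4))
                 else false)
      (canon_lists 4 0).
Proof. by vm_compute. Qed.

Theorem K22_avoid_triples (X : eqType) (l1 l2 l3 l4 : seq X) (Ts : seq (seq X)) :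
  all triple [:: l1; l2; l3; l4] -> size Ts <= 4 -> all triple Ts ->
  has (avoids^~ Ts) (K22_colorings l1 l2 l3 l4).
Proof.
move=> triple_ls sizeTs tripleTs.
set s0 := foldl add_new [::] [:: l1; l2; l3; l4].
pose h y := index y (add_new s0 (flatten Ts)).
have [ls ls_canon] := canon_chain [seq y <- flatten Ts | y \notin s0] (isT : uniq [::]) triple_ls.
have := allP canon_K22_unblockable _ ls_canon.
case: ls {ls_canon} => [|c1 [|c2 [|c3 [|c4 []]]]] // unbl.
case/and5P=> /perm_mem p1 /perm_mem p2 /perm_mem p3 /perm_mem p4 _.
have h_inj : {in flatten Ts &, injective h}.
  by move=> x y /(mem_add_new s0) xs /(mem_add_new s0) ys; apply: index_inj.
have tripleTs' : all triple (map (map h) Ts).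
  rewrite all_map; apply/allP => T TTs; have /andP[uT sT] := allP tripleTs T TTs.
  rewrite /= /triple size_map sT andbT map_inj_in_uniq //.
  by apply: sub_in2 h_inj => x xT; apply/flattenP; exists T.
have sizeTs' : size (map (map h) Ts) <= 4 by rewrite size_map.
have /hasP[V] := unblockableP unbl sizeTs' tripleTs'.
rewrite mem_sort => /(K22_colorings_map p1 p2 p3 p4) [U UK22 ->] /avoids_map avU.
by apply/hasP; exists U.
Qed.

Lemma part224_ge4 (v : 'I_8) : 4 <= v -> part224 v = 2.
Proof. by move=> v4; rewrite /part224 ltnNge (leq_trans _ v4) // ltnNge v4. Qed.

Lemma K224_lt4 (u v : 'I_8) : u < 4 -> v < 4 -> K224 u v = ((u < 2) != (v < 2)).
Proof. by move=> u4 v4; rewrite /K224 /part224 u4 v4; case: (u < 2); case: (v < 2). Qed.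

Lemma K224_list_coloring N (L : 'I_8 -> {set 'I_N}) U :
  U \in K22_colorings (enum (L (inord 0))) (enum (L (inord 1)))
                      (enum (L (inord 2))) (enum (L (inord 3))) ->
  avoids U [seq enum (L (inord i)) | i <- iota 4 4] ->
  exists f, Lcoloring K224 L f.
Proof.
move=> UK22 avU.
have freeC (v : 'I_8) : 4 <= v -> exists2 x, x \in L v & x \notin U.
  move=> v4; have /allPn[x] : ~~ all [in U] (enum (L v)).
    apply/(allP avU)/mapP; exists (val v); last by rewrite inord_val.
    by rewrite mem_iota v4 ltn_ord.
  by rewrite mem_enum; exists x.
move: UK22; rewrite mem_filter mem_choices => /andP[+ ABcols].
case: U avU freeC ABcols => [|c0 [|c1 [|c2 [|c3 []]]]] //=.
set U := [:: c0; c1; c2; c3] => _ freeC ABcols proper.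
pose f := [ffun v : 'I_8 =>
             if v < 4 then nth c0 U v else odflt c0 [pick x in L v | x \notin U]].
have f_lt4 (v : 'I_8) : v < 4 -> f v = nth c0 U v by rewrite ffunE => ->.
have f_ge4 (v : 'I_8) : 4 <= v -> f v \in L v /\ f v \notin U.
  move=> v4; rewrite ffunE ltnNge v4 /=.
  case: pickP => [x /andP[]//|none]; have [x xL xU] := freeC v v4.
  by move: (none x); rewrite xL xU.
exists f; split.
  move=> v; case: (ltnP v 4) => [v4|/f_ge4[]//]; rewrite f_lt4 //.
  have -> : L v = L (inord v) by rewrite inord_val.
  rewrite -mem_enum; move: (val v) v4 ABcols.
  by case=> [|[|[|[|]]]] //= _ /and5P[].
move=> u v uv fuv.
have [u4|u4] := ltnP u 4; have [v4|v4] := ltnP v 4.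
- move: uv fuv; rewrite K224_lt4 // !f_lt4 //; move: (val u) (val v) u4 v4.
  case/and4P: proper => ? ? ? ?.
  by move=> [|[|[|[|i]]]] [|[|[|[|j]]]] //= _ _ _ /eqP; apply/negP; rewrite // eq_sym.
- by have [_] := f_ge4 v v4; rewrite -fuv f_lt4 // mem_nth.
- by have [_] := f_ge4 u u4; rewrite fuv f_lt4 // mem_nth.
- by move: uv; rewrite /K224 !part224_ge4.
Qed.

Lemma K224_choosable : choosable K224 3.
Proof.
move=> N L sizeL.
have triple_L v : triple (enum (L v)) by rewrite /triple enum_uniq -cardE sizeL.
pose l i := enum (L (inord i)).
have triple_AB : all triple [seq l i | i <- iota 0 4].
  by apply/allP => _ /mapP[i _ ->]; apply: triple_L.
have triple_C : all triple [seq l i | i <- iota 4 4].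
  by apply/allP => _ /mapP[i _ ->]; apply: triple_L.
have sizeC : size [seq l i | i <- iota 4 4] <= 4 by [].
have /hasP[U UK22 avU] := K22_avoid_triples triple_AB sizeC triple_C.
exact: K224_list_coloring UK22 avU.
Qed.

Lemma part224_lt3 (v : 'I_8) : part224 v < 3.
Proof. by rewrite /part224; case: ifP => //; case: ifP. Qed.

Definition part3 (v : 'I_8) : 'I_3 := Ordinal (part224_lt3 v).

Lemma K224_part3 u v : K224 u v = (part3 u != part3 v).
Proof. by []. Qed.

Lemma part3_surj (i : 'I_3) : exists v, part3 v = i.
Proof.
exists (inord (2 * i)); apply: val_inj.
by case: i => [[|[|[|]]] ?] //=; rewrite /part224 inordK.
Qed.

Lemma K224_colorable3 : colorable K224 3.
Proof. by exists [ffun v => part3 v] => u v; rewrite K224_part3 !ffunE => /eqP. Qed.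

Lemma K224_not_colorable j : j < 3 -> ~ colorable K224 j.
Proof.
move=> j3 [f f_proper].
have ne (u v : 'I_8) : K224 u v -> nat_of_ord (f u) <> f v.
  by move=> uv /val_inj; apply: f_proper.
pose v0 := Ordinal (isT : 0 < 8); pose v2 := Ordinal (isT : 2 < 8).
pose v4 := Ordinal (isT : 4 < 8).
have := ne v0 v2 isT; have := ne v0 v4 isT; have := ne v2 v4 isT.
have := ltn_ord (f v0); have := ltn_ord (f v2); have := ltn_ord (f v4); lia.
Qed.

Lemma K224_chromatic_number : is_chromatic_number K224 3.
Proof. by split; [exact: K224_colorable3 | exact: K224_not_colorable]. Qed.

Lemma K224_not_choosable j : j < 3 -> ~ choosable K224 j.
Proof.
move=> j3 choosable_j; apply: (K224_not_colorable j3).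
have [|f [_ f_proper]] := choosable_j j (fun _ => [set: 'I_j]); last by exists f.
by move=> v; rewrite cardsT card_ord.
Qed.

Lemma K224_chrom_poly3 : 3`! <= chrom_poly K224 3.
Proof.
pose col (s : 'S_3) := [ffun v => s (part3 v)].
have col_inj : injective col.
  move=> s t /ffunP st; apply/permP => i; have [v <-] := part3_surj i.
  by have := st v; rewrite !ffunE.
rewrite -card_Sn -cardsT -(card_imset _ col_inj); apply: subset_leq_card.
apply/subsetP => _ /imsetP[s _ ->]; rewrite inE.
by apply/forallP => u; apply/forallP => v; rewrite K224_part3 !ffunE (inj_eq perm_inj) implybb.
Qed.

Definition set_of_nats N (l : seq nat) : {set 'I_N} := [set x : 'I_N | val x \in l].

Lemma card_set_of_nats N l : #|set_of_nats N l| = count [in l] (iota 0 N).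
Proof.
rewrite cardE /enum_mem size_filter -val_enum_ord count_map enumT.
by apply: eq_count => x; rewrite /= inE.
Qed.

Lemma PL_le_count n (e : rel 'I_n) (eN : rel nat) N (ls : seq (seq nat)) :
  size ls = n -> (forall u v : 'I_n, eN u v -> e u v) ->
  PL e (fun v => set_of_nats N (nth [::] ls v)) <=
  count (fun t => all (fun i => all (fun j => eN i j ==> (nth 0 t i != nth 0 t j))
                                    (iota 0 n)) (iota 0 n))
        (choices ls).
Proof.
move=> size_ls eN_e; rewrite -size_filter /PL cardE.
pose code (f : {ffun 'I_n -> 'I_N}) := [seq val (f v) | v <- enum 'I_n].
have code_nth f (v : 'I_n) : nth 0 (code f) v = val (f v).
  by rewrite (nth_map v) ?size_enum_ord // nth_ord_enum.
rewrite -(size_map code); apply: uniq_leq_size.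
  rewrite map_inj_uniq ?enum_uniq // => f g fg.
  by apply/ffunP => v; apply: val_inj; rewrite -!code_nth fg.
move=> t /mapP[f]; rewrite mem_enum inE => /andP[/forallP f_L /forallP f_proper] ->.
rewrite mem_filter mem_choices; apply/andP; split.
  apply/allP => i /[!mem_iota] /= i_lt; apply/allP => j /[!mem_iota] /= j_lt.
  apply/implyP => /(eN_e (Ordinal i_lt) (Ordinal j_lt)) ij.
  rewrite (code_nth f (Ordinal i_lt)) (code_nth f (Ordinal j_lt)) val_eqE.
  by have /forallP/(_ (Ordinal j_lt))/implyP := f_proper (Ordinal i_lt); apply.
have ls_enum : ls = [seq nth [::] ls v | v : 'I_n <- enum 'I_n].
  by rewrite -[LHS](mkseq_nth [::]) size_ls /mkseq -val_enum_ord -map_comp.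
rewrite [in X in all2 _ _ X]ls_enum all2E zip_map !size_map eqxx /= all_map.
by apply/allP => v _ /=; have := f_L v; rewrite inE.
Qed.

Definition bad_lists : seq (seq nat) :=
  [:: [:: 0; 4; 5]; [:: 1; 2; 4]; [:: 2; 4; 5]; [:: 0; 1; 4];
      [:: 0; 1; 4]; [:: 1; 4; 5]; [:: 0; 2; 4]; [:: 2; 4; 5]].

Definition bad_L (v : 'I_8) : {set 'I_6} := set_of_nats 6 (nth [::] bad_lists v).

Lemma bad_L_size : list_of_size bad_L 3.
Proof. by move=> v; rewrite card_set_of_nats; case: v => [[|[|[|[|[|[|[|[|//]]]]]]]] ?]. Qed.

Lemma PL_bad_L : PL K224 bad_L <= 4.
Proof.
(* part224 on nat indices: neither enum 'I_n nor inord reduces under vm_compute. *)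
pose partN (i : nat) := if i < 2 then 0 else if i < 4 then 1 else 2.
have K224_partN (u v : 'I_8) : partN u != partN v -> K224 u v by [].
apply: leq_trans (@PL_le_count _ _ (fun i j => partN i != partN j) 6 bad_lists erefl K224_partN) _.
by vm_compute.
Qed.

Theorem proposition29 :
  chromatic_choosable K224 /\ ~ weakly_enum_chromatic_choosable K224.
Proof.
split.
  exists 3; split; first exact: K224_chromatic_number.
  by split; [exact: K224_choosable | exact: K224_not_choosable].
move/(_ 3 K224_chromatic_number) => [_ /(_ _ bad_L bad_L_size) chrom_le_PL].
by have := leq_trans K224_chrom_poly3 (leq_trans chrom_le_PL PL_bad_L).
Qed.
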